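(* $L^\infty(\mathbb R^n)\cap{\rm BMO}^\Phi(\mathbb R^n)=L^\infty(\mathbb R^n)\cap{\rm bmo}^\Phi(\mathbb R^n)$; equivalently, $L^\infty(\mathbb R^n)\cap(H^\Phi_*(\mathbb R^n))^*=L^\infty(\mathbb R^n)\cap{\rm bmo}^\Phi(\mathbb R^n)$.
   Context: $\Phi(\tau):=\tau/\log(e+\tau)$. ${\rm BMO}^\Phi(\mathbb R^n)$ is the set of $f\in L^1_{\rm loc}$ with $\|f\|_{{\rm BMO}^\Phi}:=\sup_B\frac{\log(e+1/|B|)}{|B|}\int_B|f-f_B|\,dx<\infty$ (sup over all balls; $f_B$ the mean of $f$ on $B$). ${\rm bmo}^\Phi(\mathbb R^n)$ is the set of $f\in L^1_{\rm loc}$ with $\sup_{B:|B|<1}\frac{\log(e+1/|B|)}{|B|}\int_B|f-f_B|+\sup_{B:|B|\ge1}\frac{\log(e+1/|B|)}{|B|}\int_B|f|<\infty$. ${\rm BMO}^\Phi(\mathbb R^n)$ is the dual of the variant Orlicz Hardy space $H^\Phi_*(\mathbb R^n):=\{f\in\mathcal S':\sum_{k\in\mathbb Z^n}\|M(f,\varphi)\mathbf 1_{k+[0,1)^n}\|_{L^\Phi}<\infty\}$, where $M(f,\varphi)(x)=\sup_{s>0}|f*\varphi_s(x)|$ for a fixed $\varphi\in\mathcal S$ with $\int\varphi\ne0$ and $\|h\|_{L^\Phi}:=\inf\{\lambda>0:\int\Phi(|h|/\lambda)\le1\}$. *)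

From HB Require Import structures.
From mathcomp Require Import all_boot all_order all_algebra.
From mathcomp Require Import all_classical all_reals all_analysis.
Set Implicit Arguments. Unset Strict Implicit. Unset Printing Implicit Defensive.
Import Order.TTheory GRing.Theory Num.Theory.
Local Open Scope classical_set_scope.
Local Open Scope ring_scope.

(* R^n is modelled as n.-tuple R with its product (Borel) sigma-algebra. *)
Notation Rn R n := (n.-tuple R).

(* mu is Lebesgue measure on R^n: it gives every half-open box its volume.
   (This determines mu uniquely on the Borel sets.) *)
Definition is_lebesgue {R : realType} (n : nat)
  (mu : {measure set (Rn R n) -> \bar R}) : Prop :=
  forall a b : Rn R n, (forall i, tnth a i <= tnth b i) ->
    mu [set x | forall i, tnth a i < tnth x i <= tnth b i]
    = (\prod_(i < n) (tnth b i - tnth a i))%:E.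

Definition eball {R : realType} (n : nat) (c : Rn R n) (r : R) : set (Rn R n) :=
  [set y | \sum_(i < n) (tnth y i - tnth c i) ^+ 2 < r ^+ 2].

Section Defs.
Context {R : realType} (n : nat) (mu : {measure set (Rn R n) -> \bar R}).

Definition bvol (B : set (Rn R n)) : R := fine (mu B).

Definition bint (B : set (Rn R n)) (g : Rn R n -> R) : R :=
  fine (\int[mu]_(y in B) (g y)%:E)%E.

Definition bmean (B : set (Rn R n)) (f : Rn R n -> R) : R :=
  bint B f / bvol B.

Definition wgt (B : set (Rn R n)) : R :=
  ln (expR 1 + (bvol B)^-1) / bvol B.

Definition L1loc (f : Rn R n -> R) : Prop :=
  measurable_fun [set: Rn R n] f /\
  forall c r, 0 < r -> mu.-integrable (eball c r) (fun y => (f y)%:E).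

Definition Linfty (f : Rn R n -> R) : Prop :=
  measurable_fun [set: Rn R n] f /\
  exists M : R, {ae mu, forall x, `|f x| <= M}.

Definition BMOPhi (f : Rn R n -> R) : Prop :=
  L1loc f /\
  exists C : R, forall c r, 0 < r ->
    wgt (eball c r) * bint (eball c r) (fun y => `|f y - bmean (eball c r) f|)
      <= C.

Definition bmoPhi (f : Rn R n -> R) : Prop :=
  L1loc f /\
  exists C : R,
    (forall c r, 0 < r -> bvol (eball c r) < 1 ->
      wgt (eball c r) * bint (eball c r) (fun y => `|f y - bmean (eball c r) f|)
        <= C) /\
    (forall c r, 0 < r -> 1 <= bvol (eball c r) ->
      wgt (eball c r) * bint (eball c r) (fun y => `|f y|) <= C).

End Defs.

From HB Require Import structures.
From mathcomp Require Import all_boot all_order all_algebra.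
From mathcomp Require Import all_classical all_reals all_analysis.
Set Implicit Arguments. Unset Strict Implicit. Unset Printing Implicit Defensive.
Import Order.TTheory GRing.Theory Num.Theory.
Local Open Scope classical_set_scope.
Local Open Scope ring_scope.

(* For a bounded function f, |f| <= K a.e., the two spaces differ only in how
   balls with |B| >= 1 are treated: BMO^Phi controls the mean oscillation
   int_B |f - f_B|, bmo^Phi controls int_B |f|.  On such balls the weight
   log(e + 1/|B|)/|B| is at most log(e + 1)/|B|, and both integrals are at most
   a constant multiple of K |B| (since |f_B| <= K), so both quantities are
   bounded by 2 K log(e + 1) whatever f is.  On balls with |B| < 1 the two
   conditions coincide.  Hence each condition implies the other with constant
   max(C, 2 K log(e + 1)). *)

(* Euclidean balls are Borel sets: they are sublevel sets of a measurable sum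
   of squares. *)
Lemma eball_measurable {R : realType} (n : nat) (c : n.-tuple R) (r : R) :
  measurable (eball c r).
Proof.
set g := fun y : n.-tuple R => \sum_(i < n) (tnth y i - tnth c i) ^+ 2.
have mg : measurable_fun setT g.
  apply: measurable_sum => i; apply: measurable_realfun.measurable_funX.
  apply: measurable_realfun.measurable_funB => //; exact: measurable_tnth.
have -> : eball c r = setT `&` g @^-1` `]-oo, r ^+ 2[%classic.
  by apply/seteqP; split => y; rewrite /= in_itv /=; [move=> h; split|case].
exact: mg.
Qed.

Section IntegralBounds.
Context {R : realType} (n : nat) (mu : {measure set (n.-tuple R) -> \bar R}).
Variables (B : set (n.-tuple R)) (g : n.-tuple R -> R) (K : R).
Hypotheses (mB : measurable B) (mg : measurable_fun B g) (K0 : 0 <= K).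
Hypothesis muB : mu B = (bvol mu B)%:E.
Hypothesis g_le : {ae mu, forall x, B x -> `|g x| <= K}.

(* Needed for the degenerate (infinite) values of the integral. *)
Let vol_ge0 : 0 <= bvol mu B. Proof. by rewrite -lee_fin -muB. Qed.

Lemma integral_norm_le :
  (\int[mu]_(y in B) (`|g y|)%:E <= (K * bvol mu B)%:E)%E.
Proof.
have le_cst : (\int[mu]_(y in B) (`|g y|)%:E <= \int[mu]_(y in B) (cst K%:E) y)%E.
  apply: ae_ge0_le_integral => //.
  by apply/measurable_realfun.measurable_EFinP; exact: measurableT_comp.
by rewrite integral_cst // muB in le_cst.
Qed.

Lemma bint_norm_le : bint mu B (fun y => `|g y|) <= K * bvol mu B.
Proof.
rewrite /bint; move: integral_norm_le.
case: (\int[mu]_(y in B) _)%E => [r||] //=;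
  by [rewrite lee_fin | move=> _; rewrite mulr_ge0].
Qed.

Lemma norm_bint_le : `|bint mu B g| <= K * bvol mu B.
Proof.
have abs_le := @le_abse_integral _ _ _ mu B (fun y => (g y)%:E) mB
  (proj2 (measurable_realfun.measurable_EFinP _ _) mg).
rewrite /bint; move: abs_le; case: (\int[mu]_(y in B) _)%E => [r||] //=.
- move=> h; rewrite -lee_fin; apply: le_trans integral_norm_le.
  by under eq_integral => x _ do rewrite -abse_EFin.
- by move=> _; rewrite normr0 mulr_ge0.
- by move=> _; rewrite normr0 mulr_ge0.
Qed.

End IntegralBounds.

Section LargeBalls.
Context {R : realType} (n : nat) (mu : {measure set (n.-tuple R) -> \bar R}).

Lemma bvol_ge1_finite (B : set (n.-tuple R)) :
  1 <= bvol mu B -> mu B = (bvol mu B)%:E.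
Proof.
by rewrite /bvol; case: (mu B) => [r||] //=; rewrite ler10.
Qed.

Lemma wgt_mul_bvol_le (B : set (n.-tuple R)) :
  1 <= bvol mu B -> wgt mu B * bvol mu B <= ln (expR 1 + 1).
Proof.
move=> v1; have vp : 0 < bvol mu B by apply: lt_le_trans v1.
rewrite /wgt divfK ?gt_eqF // ler_ln ?posrE; last 2 first.
- by rewrite addr_gt0 ?expR_gt0 ?invr_gt0.
- by rewrite addr_gt0 ?expR_gt0.
by rewrite lerD2l invr_le1 // unitfE gt_eqF.
Qed.

Lemma wgt_bint_large (B : set (n.-tuple R)) (g : n.-tuple R -> R) (K : R) :
  measurable B -> measurable_fun B g -> 0 <= K -> 1 <= bvol mu B ->
  {ae mu, forall x, B x -> `|g x| <= K} ->
  wgt mu B * bint mu B (fun y => `|g y|) <= K * ln (expR 1 + 1).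
Proof.
move=> mB mg K0 v1 g_le.
have vp : 0 < bvol mu B by apply: lt_le_trans v1.
have w0 : 0 <= wgt mu B.
  have e1 : 1 <= expR (1 : R) by rewrite -expR0 ler_expR.
  rewrite /wgt divr_ge0 ?(ltW vp) //; apply: ln_ge0.
  by apply: le_trans e1 _; rewrite lerDl invr_ge0 ltW.
apply: (le_trans (ler_wpM2l w0 (bint_norm_le mB mg K0 (bvol_ge1_finite v1) g_le))).
by rewrite mulrCA ler_wpM2l // wgt_mul_bvol_le.
Qed.

Variables (f : n.-tuple R -> R) (K : R).
Hypotheses (mf : measurable_fun setT f) (K0 : 0 <= K).
Hypothesis f_le : {ae mu, forall x, `|f x| <= K}.

Let f_le_on (B : set (n.-tuple R)) : {ae mu, forall x, B x -> `|f x| <= K}.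
Proof. by move: f_le; apply: filterS => x h _. Qed.

Let mf_on (B : set (n.-tuple R)) : measurable_fun B f.
Proof. exact: measurable_funS measurableT (subsetT _) mf. Qed.

Lemma bmean_norm_le (B : set (n.-tuple R)) :
  measurable B -> 1 <= bvol mu B -> `|bmean mu B f| <= K.
Proof.
move=> mB v1; have vp : 0 < bvol mu B by apply: lt_le_trans v1.
rewrite /bmean normrM normfV (gtr0_norm vp) ler_pdivrMr //.
exact: norm_bint_le mB (@mf_on _) K0 (bvol_ge1_finite v1) (@f_le_on _).
Qed.

(* Mean oscillation on a large ball: |f - f_B| <= 2K, whence the bound. *)
Lemma oscillation_large (c : n.-tuple R) (r : R) :
  1 <= bvol mu (eball c r) ->
  wgt mu (eball c r) *
    bint mu (eball c r) (fun y => `|f y - bmean mu (eball c r) f|)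
  <= (K + K) * ln (expR 1 + 1).
Proof.
move=> v1; set B := eball c r; set m := bmean mu B f.
have mB : measurable B := eball_measurable c r.
have m_le : `|m| <= K := bmean_norm_le mB v1.
have osc_le : {ae mu, forall x, B x -> `|f x - m| <= K + K}.
  move: f_le; apply: filterS => x h _.
  exact: le_trans (ler_normB _ _) (lerD h m_le).
apply: wgt_bint_large mB _ _ v1 osc_le; last by rewrite addr_ge0.
exact: measurable_realfun.measurable_funB.
Qed.

Lemma size_large (c : n.-tuple R) (r : R) :
  1 <= bvol mu (eball c r) ->
  wgt mu (eball c r) * bint mu (eball c r) (fun y => `|f y|)
  <= K * ln (expR 1 + 1).
Proof.
move=> v1; exact: wgt_bint_large (eball_measurable c r) (@mf_on _) K0 v1 (@f_le_on _).
Qed.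

Lemma BMOPhi_bmoPhi : BMOPhi mu f -> bmoPhi mu f.
Proof.
case=> [L1 [C hC]]; split => //.
exists (Num.max C (K * ln (expR 1 + 1))); split => c r r0 vB.
- by apply: le_trans (hC c r r0) _; rewrite le_max lexx.
- by apply: le_trans (size_large vB) _; rewrite le_max lexx orbT.
Qed.

Lemma bmoPhi_BMOPhi : bmoPhi mu f -> BMOPhi mu f.
Proof.
case=> [L1 [C [small _]]]; split => //.
exists (Num.max C ((K + K) * ln (expR 1 + 1))) => c r r0.
have [v1|v1] := ltP (bvol mu (eball c r)) 1.
- by apply: le_trans (small c r r0 v1) _; rewrite le_max lexx.
- by apply: le_trans (oscillation_large v1) _; rewrite le_max lexx orbT.
Qed.

End LargeBalls.

Theorem lemma4p40 (R : realType) (n : nat) (hn : (0 < n)%N)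
  (mu : {measure set (n.-tuple R) -> \bar R}) (hmu : is_lebesgue mu)
  (f : n.-tuple R -> R) :
  Linfty mu f -> (BMOPhi mu f <-> bmoPhi mu f).
Proof.
move=> [mf [M f_le_M]].
have f_le : {ae mu, forall x, `|f x| <= `|M|}.
  by move: f_le_M; apply: filterS => x h; apply: le_trans h (ler_norm _).
split; [exact: BMOPhi_bmoPhi mf (normr_ge0 M) f_le |
        exact: bmoPhi_BMOPhi mf (normr_ge0 M) f_le].
Qed.
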